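(* Let $m\ge n$, let $\mathcal{U}\subseteq\mathbb{R}$, and let $F:\mathcal{U}\rightarrow M_{m\times n}(\mathbb{C})$ be defined by $F(x)=\sum_{k=0}^{p}A_k x^k$, where $A_k\in M_{m\times n}(\mathbb{C})$ for $k=0,1,\dots,p$. Let $\mathcal{Y}(\mathcal{U})=\{x\in\mathcal{U} : F(x)\text{ has repeated singular values}\}$. Then either $\mathcal{Y}(\mathcal{U})=\mathcal{U}$ or $\mathcal{Y}(\mathcal{U})$ is finite.
   Context: $M_{m\times n}(\mathbb{C})$ denotes the set of $m\times n$ complex matrices; throughout $m\ge n$. The singular values of $A\in M_{m\times n}(\mathbb{C})$ are the $n$ nonnegative square roots of the eigenvalues of $A^{\ast}A$, counted with multiplicity; $A$ has repeated singular values if two of these $n$ values coincide. *)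

From HB Require Import structures.
From mathcomp Require Import all_boot all_order all_algebra.
From mathcomp Require Import complex.
From mathcomp Require Import reals.
Set Implicit Arguments. Unset Strict Implicit. Unset Printing Implicit Defensive.
Import Order.TTheory GRing.Theory Num.Theory.
Local Open Scope ring_scope.
Local Open Scope complex_scope.

Definition ctrmx (R : rcfType) (m n : nat) (A : 'M[R[i]]_(m, n)) : 'M[R[i]]_(n, m) :=
  (map_mx (fun z => z^*) A)^T.

(* A has repeated singular values: listing the n eigenvalues of A^* A with
   multiplicity (the roots of its characteristic polynomial), the n singular
   values (their nonnegative square roots) are not pairwise distinct. *)
Definition repeated_singular_values (R : rcfType) (m n : nat)
    (A : 'M[R[i]]_(m, n)) : Prop :=
  exists rs : seq R[i],
    char_poly (ctrmx A *m A) = \prod_(r <- rs) ('X - r%:P) /\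
    ~~ uniq [seq sqrtC r | r <- rs].

Definition mxpoly_eval (R : rcfType) (m n p : nat)
    (A : nat -> 'M[R[i]]_(m, n)) (x : R) : 'M[R[i]]_(m, n) :=
  \sum_(k < p.+1) ((x%:C) ^+ k) *: A k.

(* The singular values of F(x) are repeated exactly when the characteristic
   polynomial of F(x)^* F(x) has a multiple root, i.e. when its discriminant
   vanishes.  Because conjugation fixes the real point x, F(x)^* F(x) is the
   value at x of the polynomial matrix F(X)^* F(X), so this discriminant is the
   value at x of one fixed polynomial D with complex coefficients.  Either D = 0
   and every x is in Y(U), or Y(U) lies in the finite set of roots of D. *)
From HB Require Import structures.
From mathcomp Require Import all_boot all_order all_algebra all_field.
From mathcomp Require Import complex.
From mathcomp Require Import reals.
Set Implicit Arguments. Unset Strict Implicit. Unset Printing Implicit Defensive.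
Import Order.TTheory GRing.Theory Num.Theory.
Local Open Scope ring_scope.

Lemma separable_polyE_resultant (R : idomainType) (p : {poly R}) :
  p != 0 -> separable_poly p = (resultant p p^`() != 0).
Proof.
move=> p_nz; rewrite unlock coprimep_def resultant_eq0 -leqNgt.
have : gcdp p p^`() != 0 by rewrite gcdp_eq0 negb_and p_nz.
by rewrite -size_poly_gt0 eqn_leq => ->; rewrite andbT.
Qed.

Lemma resultant1_deriv (R : comNzRingType) : resultant (1 : {poly R}) 1^`() = 1.
Proof.
rewrite derivC /resultant; move: (Sylvester_mx _ _).
by rewrite size_poly1 size_poly0 => S; exact: det_mx00.
Qed.

Lemma lead_coef_deriv_monic (R : nzRingType) (p : {poly R}) k :
  p \is monic -> size p = k.+2 -> k.+1%:R != 0 :> R ->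
  lead_coef p^`() = k.+1%:R.
Proof.
move=> /monicP p_monic size_p k1_nz.
have coef_k : p^`()`_k = k.+1%:R.
  by rewrite coef_deriv -p_monic lead_coefE size_p.
have size_p' : size p^`() = k.+1.
  by rewrite /deriv size_p size_poly_eq //= -coef_deriv coef_k.
by rewrite lead_coefE size_p' coef_k.
Qed.

(* [map_resultant] applies because f keeps both leading coefficients nonzero:
   p is monic and, in characteristic 0, p^`() has leading coefficient
   (size p).-1; the degenerate case p = 1, where p^`() = 0, is done by hand. *)
Lemma map_resultant_deriv (aR : comNzRingType) (rR : idomainType)
    (f : {rmorphism {poly aR} -> rR}) (p : {poly {poly aR}}) :
  [pchar rR] =i pred0 -> p \is monic ->
  f (resultant p p^`()) = resultant (map_poly f p) (map_poly f p)^`().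
Proof.
move=> /pcharf0P rR_char0 p_monic.
have /monicP lead_p := p_monic.
case size_p : (size p) => [|[|k]].
- by move: (monic_neq0 p_monic); rewrite -size_poly_eq0 size_p.
- have -> : p = 1.
    have coef0_p : p`_0 = 1 by rewrite -lead_p lead_coefE size_p.
    by rewrite (size1_polyC (eq_leq size_p)) coef0_p.
  by rewrite rmorph1 resultant1_deriv rmorph1 resultant1_deriv.
have fk1_nz : f k.+1%:R != 0 by rewrite rmorph_nat rR_char0.
have k1_nz : k.+1%:R != 0 :> {poly aR}.
  by apply: contra_neq fk1_nz => ->; rewrite rmorph0.
rewrite deriv_map map_resultant ?lead_p ?rmorph1 ?oner_eq0 //.
by rewrite (lead_coef_deriv_monic p_monic size_p k1_nz).
Qed.

Local Open Scope complex_scope.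

Lemma repeated_singular_valuesE (R : rcfType) (m n : nat) (M : 'M[R[i]]_(m, n)) :
  repeated_singular_values M <-> ~~ separable_poly (char_poly (ctrmx M *m M)).
Proof.
rewrite /repeated_singular_values; split=> [[rs [-> rs_rep]] | ].
  by rewrite separable_prod_XsubC -(map_inj_uniq (@sqrtC_inj _)).
have [rs ->] := closed_field_poly_normal (char_poly (ctrmx M *m M)).
rewrite (monicP (char_poly_monic _)) scale1r => rs_rep.
by exists rs; rewrite separable_prod_XsubC (map_inj_uniq (@sqrtC_inj _)) in rs_rep *.
Qed.

Lemma real_roots_finite (R : rcfType) (D : {poly R[i]}) :
  D != 0 -> exists s : seq R, forall x, root D x%:C -> x \in s.
Proof.
move=> D_nz; have [rs D_split] := closed_field_poly_normal D.
exists [seq complex.Re z | z <- rs] => x.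
rewrite rootE D_split hornerZ mulf_eq0 lead_coef_eq0 (negbTE D_nz) /=.
rewrite horner_prod prodf_seq_eq0 => /hasP [z z_rs].
by rewrite hornerXsubC subr_eq0 => /eqP x_z; apply/mapP; exists z; rewrite // -x_z.
Qed.

Lemma horner_conj_real (R : rcfType) (q : {poly R[i]}) (x : R) :
  (map_poly conjc q).[x%:C] = (q.[x%:C])^*.
Proof. by rewrite -{1}conjc_real horner_map. Qed.

Definition poly_ctrmx (R : rcfType) (m n : nat) (G : 'M[{poly R[i]}]_(m, n)) :
    'M[{poly R[i]}]_(n, m) :=
  (map_mx (map_poly conjc) G)^T.

Lemma horner_poly_ctrmx (R : rcfType) (m n : nat) (G : 'M[{poly R[i]}]_(m, n))
    (x : R) :
  map_mx (horner_eval x%:C) (poly_ctrmx G) = ctrmx (map_mx (horner_eval x%:C) G).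
Proof. by apply/matrixP=> i j; rewrite !mxE /= !horner_evalE horner_conj_real. Qed.

Section MatrixPolynomial.

Variables (R : rcfType) (m n p : nat) (A : nat -> 'M[R[i]]_(m, n)).

Definition mxpoly_formal : 'M[{poly R[i]}]_(m, n) :=
  \sum_(k < p.+1) 'X^k *: map_mx polyC (A k).

Lemma horner_mxpoly_formal (x : R) :
  map_mx (horner_eval x%:C) mxpoly_formal = mxpoly_eval p A x.
Proof.
apply/matrixP=> i j; rewrite !mxE /mxpoly_formal /mxpoly_eval !summxE rmorph_sum.
by apply: eq_bigr => k _; rewrite !mxE /= horner_evalE hornerM hornerXn hornerC.
Qed.

Definition singular_discriminant : {poly R[i]} :=
  let Q := char_poly (poly_ctrmx mxpoly_formal *m mxpoly_formal) in
  resultant Q Q^`().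

Lemma horner_singular_discriminant (x : R) :
  let M := mxpoly_eval p A x in
  singular_discriminant.[x%:C] =
    resultant (char_poly (ctrmx M *m M)) (char_poly (ctrmx M *m M))^`().
Proof.
rewrite -horner_evalE map_resultant_deriv ?char_poly_monic //; last exact: pchar_num.
by rewrite map_char_poly map_mxM horner_poly_ctrmx horner_mxpoly_formal.
Qed.

Lemma repeated_singular_values_root (x : R) :
  repeated_singular_values (mxpoly_eval p A x) <-> root singular_discriminant x%:C.
Proof.
rewrite repeated_singular_valuesE rootE horner_singular_discriminant.
by rewrite separable_polyE_resultant ?negbK // monic_neq0 ?char_poly_monic.
Qed.

End MatrixPolynomial.

Theorem theorem3p9 (R : realType) (m n p : nat) (hmn : (n <= m)%N)
    (U : R -> Prop) (A : nat -> 'M[R[i]]_(m, n)) :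
  (* Y(U) = U *)
  (forall x, U x -> repeated_singular_values (mxpoly_eval p A x))
  \/ (* Y(U) finite *)
  (exists s : seq R, forall x,
        U x -> repeated_singular_values (mxpoly_eval p A x) -> x \in s).
Proof.
have [D0 | D_nz] := eqVneq (singular_discriminant p A) 0.
  by left=> x _; apply/(repeated_singular_values_root p A x); rewrite D0 root0.
right; have [s D_roots] := real_roots_finite D_nz.
by exists s => x _ /(repeated_singular_values_root p A x); apply: D_roots.
Qed.
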